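(* Let $(X,T)$ be a compact Hausdorff flow in which every point of $X$ is almost automorphic. Then $(X,T)$ is distal, the enveloping semigroup $\mathcal E(X,T)$ is a group, and whenever $\{t_i\}_{i\in I}\subset T$ is a net with $t_i\to g\in\mathcal E(X,T)$ (in the product topology of $X^X$), the net $\{t_i^{-1}\}_{i\in I}$ converges to $g^{-1}\in\mathcal E(X,T)$.
   Context: $X$ compact Hausdorff, $T$ a topological group acting continuously on $X$. A point $x$ is almost automorphic if for every net $\{t_i\}\subset T$ with $t_ix\to y$ it holds that $t_i^{-1}y\to x$. Two points $x,y$ are proximal if there are a net $\{t_i\}\subset T$ and $z\in X$ with $t_ix\to z$ and $t_iy\to z$; the flow is distal if no two distinct points are proximal. The enveloping semigroup $\mathcal E(X,T)$ is the closure of (the maps given by) $T$ in $X^X$ with the product (pointwise convergence) topology, with composition as semigroup operation. *)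

From Stdlib Require Import List.

Set Implicit Arguments.

Record Topology (X : Type) := {
  is_open : (X -> Prop) -> Prop;
  open_full : is_open (fun _ => True);
  open_inter : forall U V, is_open U -> is_open V -> is_open (fun x => U x /\ V x);
  open_union : forall F : (X -> Prop) -> Prop,
      (forall U, F U -> is_open U) -> is_open (fun x => exists U, F U /\ U x)
}.

Definition continuous (A B : Type) (tA : Topology A) (tB : Topology B) (f : A -> B) : Prop :=
  forall W, is_open tB W -> is_open tA (fun a => W (f a)).

Definition prod_open (A B : Type) (tA : Topology A) (tB : Topology B) (W : A * B -> Prop) : Prop :=
  forall p, W p -> exists U V, is_open tA U /\ is_open tB V /\ U (fst p) /\ V (snd p) /\
      (forall a b, U a -> V b -> W (a, b)).

Definition continuous2 (A B C : Type) (tA : Topology A) (tB : Topology B) (tC : Topology C)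
  (f : A -> B -> C) : Prop :=
  forall W, is_open tC W -> prod_open tA tB (fun p => W (f (fst p) (snd p))).

Definition compact (X : Type) (tX : Topology X) : Prop :=
  forall F : (X -> Prop) -> Prop,
    (forall U, F U -> is_open tX U) -> (forall x, exists U, F U /\ U x) ->
    exists l : list (X -> Prop), (forall U, In U l -> F U) /\
      (forall x, exists U, In U l /\ U x).

Definition hausdorff (X : Type) (tX : Topology X) : Prop :=
  forall x y, x <> y -> exists U V, is_open tX U /\ is_open tX V /\ U x /\ V y /\
      (forall z, U z -> V z -> False).

Record directed (I : Type) (le : I -> I -> Prop) : Prop := {
  dir_refl : forall i, le i i;
  dir_trans : forall i j k, le i j -> le j k -> le i k;
  dir_upper : forall i j, exists k, le i k /\ le j k;
  dir_inhabited : inhabited I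
}.

Definition converges (X : Type) (opn : (X -> Prop) -> Prop) (I : Type) (le : I -> I -> Prop)
  (net : I -> X) (x : X) : Prop :=
  forall U, opn U -> U x -> exists i0, forall i, le i0 i -> U (net i).

(** Open sets of the product (pointwise convergence) topology on X^X. *)
Definition fun_open (X : Type) (tX : Topology X) (W : (X -> X) -> Prop) : Prop :=
  forall f, W f -> exists l : list (X * (X -> Prop)),
    (forall p, In p l -> is_open tX (snd p) /\ snd p (f (fst p))) /\
    (forall g, (forall p, In p l -> snd p (g (fst p))) -> W g).

Record is_group (T : Type) (mul : T -> T -> T) (inv : T -> T) (e : T) : Prop := {
  grp_assoc : forall a b c, mul a (mul b c) = mul (mul a b) c;
  grp_mul1l : forall a, mul e a = a;
  grp_mul1r : forall a, mul a e = a;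
  grp_mulVl : forall a, mul (inv a) a = e;
  grp_mulVr : forall a, mul a (inv a) = e
}.

Definition topological_group (T : Type) (tT : Topology T) (mul : T -> T -> T) (inv : T -> T)
  (e : T) : Prop :=
  is_group mul inv e /\ continuous2 tT tT tT mul /\ continuous tT tT inv.

Definition continuous_action (T X : Type) (tT : Topology T) (tX : Topology X)
  (mul : T -> T -> T) (e : T) (act : T -> X -> X) : Prop :=
  (forall x, act e x = x) /\
  (forall s t x, act (mul s t) x = act s (act t x)) /\
  continuous2 tT tX tX act.

Definition almost_automorphic (T X : Type) (tX : Topology X) (inv : T -> T)
  (act : T -> X -> X) (x : X) : Prop :=
  forall (I : Type) (le : I -> I -> Prop), directed le ->
  forall (t : I -> T) (y : X),
    converges (is_open tX) le (fun i => act (t i) x) y ->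
    converges (is_open tX) le (fun i => act (inv (t i)) y) x.

Definition proximal (T X : Type) (tX : Topology X) (act : T -> X -> X) (x y : X) : Prop :=
  exists (I : Type) (le : I -> I -> Prop) (t : I -> T) (z : X),
    directed le /\
    converges (is_open tX) le (fun i => act (t i) x) z /\
    converges (is_open tX) le (fun i => act (t i) y) z.

Definition distal (T X : Type) (tX : Topology X) (act : T -> X -> X) : Prop :=
  forall x y, proximal tX act x y -> x = y.

(** The enveloping semigroup: closure of {act t | t in T} in X^X. *)
Definition enveloping (T X : Type) (tX : Topology X) (act : T -> X -> X) (g : X -> X) : Prop :=
  forall W, fun_open tX W -> W g -> exists t, W (act t).

Definition enveloping_is_group (T X : Type) (tX : Topology X) (act : T -> X -> X) : Prop :=
  enveloping tX act (fun x => x) /\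
  (forall g h, enveloping tX act g -> enveloping tX act h ->
     enveloping tX act (fun x => g (h x))) /\
  (forall g, enveloping tX act g -> exists h, enveloping tX act h /\
     (forall x, g (h x) = x) /\ (forall x, h (g x) = x)).

From Stdlib Require Import List Classical ClassicalEpsilon FunctionalExtensionality PropExtensionality.

(* Almost automorphy of a point x turns
   a limit  t_i x --> y  into the reversed limit  t_i^-1 y --> x; applied at
   every point this gives:
   - distality: if t_i x --> z and t_i y --> z, then x and y are both the
     limit of t_i^-1 z, so x = y by the Hausdorff property;
   - inverse limits: if t_i --> g and g h = id pointwise, then t_i^-1 --> h
     pointwise, hence in the product topology of X^X;
   - surjectivity of every g in E(X,T): for y in X, a cluster point x of
     t_i^-1 y (compactness) is the limit of a subnet, and reversing that
     limit gives g x = y.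
   Injectivity of g comes from distality (g x = g y makes x, y proximal), so
   each g in E(X,T) is a bijection whose inverse is the limit of t_i^-1 and
   hence lies in E(X,T); closure of E(X,T) under composition is general. *)

Lemma open_of_local {X : Type} (tX : Topology X) (S : X -> Prop) :
  (forall x, S x -> exists V, is_open tX V /\ V x /\ forall z, V z -> S z) -> is_open tX S.
Proof.
  intros Hloc.
  assert (HS : S = (fun x => exists U, (fun V => is_open tX V /\ forall z, V z -> S z) U /\ U x)).
  { apply functional_extensionality; intro x; apply propositional_extensionality; split.
    - intro Hx. destruct (Hloc x Hx) as [V [HV [Vx HVS]]]. exists V; auto.
    - intros [U [[_ HUS] Ux]]. auto. }
  rewrite HS. apply open_union. intros U [HU _]; exact HU.
Qed.

Lemma action_translation_continuous {T X : Type} (tT : Topology T) (tX : Topology X)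
  (mul : T -> T -> T) (e : T) (act : T -> X -> X) :
  continuous_action tT tX mul e act -> forall t, continuous tX tX (act t).
Proof.
  intros [_ [_ Hjoint]] t U HU.
  apply open_of_local. intros y Hy.
  destruct (Hjoint U HU (t, y) Hy) as [A [B [_ [HB [At [By HAB]]]]]].
  exists B. repeat split; [exact HB | exact By |].
  intros z Bz. exact (HAB t z At Bz).
Qed.

Lemma fun_open_precompose {X : Type} (tX : Topology X) (h : X -> X) (W : (X -> X) -> Prop) :
  fun_open tX W -> fun_open tX (fun f => W (fun x => f (h x))).
Proof.
  intros HW f Hf. destruct (HW _ Hf) as [l [Hl HlW]].
  exists (map (fun p => (h (fst p), snd p)) l). split.
  - intros q Hq. apply in_map_iff in Hq. destruct Hq as [p [<- Hp]]. exact (Hl p Hp).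
  - intros g Hg. apply HlW. intros p Hp.
    apply (Hg (h (fst p), snd p)). apply in_map_iff. exists p; auto.
Qed.

Lemma fun_open_postcompose {X : Type} (tX : Topology X) (k : X -> X) (W : (X -> X) -> Prop) :
  continuous tX tX k -> fun_open tX W -> fun_open tX (fun f => W (fun x => k (f x))).
Proof.
  intros Hk HW f Hf. destruct (HW _ Hf) as [l [Hl HlW]].
  exists (map (fun p => (fst p, fun y => snd p (k y))) l). split.
  - intros q Hq. apply in_map_iff in Hq. destruct Hq as [p [<- Hp]].
    destruct (Hl p Hp) as [Ho Hv]. split; [apply Hk, Ho | exact Hv].
  - intros g Hg. apply HlW. intros p Hp.
    apply (Hg (fst p, fun y => snd p (k y))). apply in_map_iff. exists p; auto.
Qed.

Lemma fun_open_inter {X : Type} (tX : Topology X) (W1 W2 : (X -> X) -> Prop) :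
  fun_open tX W1 -> fun_open tX W2 -> fun_open tX (fun f => W1 f /\ W2 f).
Proof.
  intros H1 H2 f [F1 F2].
  destruct (H1 f F1) as [l1 [A1 B1]]. destruct (H2 f F2) as [l2 [A2 B2]].
  exists (l1 ++ l2). split.
  - intros p Hp. apply in_app_or in Hp. destruct Hp; auto.
  - intros g Hg. split; [apply B1 | apply B2]; intros p Hp; apply Hg, in_or_app; auto.
Qed.

Definition eventually {I : Type} (le : I -> I -> Prop) (P : I -> Prop) : Prop :=
  exists i0, forall i, le i0 i -> P i.

Lemma eventually_all {I A : Type} (le : I -> I -> Prop) (P : A -> I -> Prop) (l : list A) :
  directed le -> (forall a, In a l -> eventually le (P a)) ->
  eventually le (fun i => forall a, In a l -> P a i).
Proof.
  intros Hd Hl. induction l as [|a l IH].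
  - destruct (dir_inhabited Hd) as [k]. exists k. intros i _ a [].
  - destruct IH as [k1 Hk1]; [intros b Hb; apply Hl; right; exact Hb|].
    destruct (Hl a (or_introl eq_refl)) as [k2 Hk2].
    destruct (dir_upper Hd k1 k2) as [k [H1 H2]].
    exists k. intros i Hki b [<-|Hb].
    + apply Hk2. exact (dir_trans Hd _ _ _ H2 Hki).
    + apply Hk1; [exact (dir_trans Hd _ _ _ H1 Hki) | exact Hb].
Qed.

Lemma converges_ext {X I : Type} (opn : (X -> Prop) -> Prop) (le : I -> I -> Prop)
  (u v : I -> X) (x : X) :
  (forall i, u i = v i) -> converges opn le u x -> converges opn le v x.
Proof.
  intros Huv Hu U HU Ux. destruct (Hu U HU Ux) as [i0 Hi0].
  exists i0. intros i Hi. rewrite <- Huv. auto.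
Qed.

Lemma limit_unique {X I : Type} (tX : Topology X) (le : I -> I -> Prop) (u : I -> X) (a b : X) :
  hausdorff tX -> directed le ->
  converges (is_open tX) le u a -> converges (is_open tX) le u b -> a = b.
Proof.
  intros HXh Hd Ha Hb. apply NNPP. intro Hab.
  destruct (HXh a b Hab) as [U [V [HU [HV [Ua [Vb HUV]]]]]].
  destruct (Ha U HU Ua) as [i0 Hi0]. destruct (Hb V HV Vb) as [i1 Hi1].
  destruct (dir_upper Hd i0 i1) as [k [Hk0 Hk1]].
  exact (HUV _ (Hi0 k Hk0) (Hi1 k Hk1)).
Qed.

Lemma converges_fun_iff_pointwise {X I : Type} (tX : Topology X) (le : I -> I -> Prop)
  (f : I -> X -> X) (g : X -> X) :
  directed le ->
  converges (fun_open tX) le f g <-> forall x, converges (is_open tX) le (fun i => f i x) (g x).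
Proof.
  intros Hd. split.
  - intros Hf x U HU Ux. apply (Hf (fun k => U (k x))); [|exact Ux].
    intros k Hk. exists ((x, U) :: nil). split.
    + intros p [<-|[]]. simpl. auto.
    + intros k' Hk'. apply (Hk' (x, U)). left; reflexivity.
  - intros Hpt W HW Wg. destruct (HW g Wg) as [l [Hl HlW]].
    destruct (eventually_all le (fun p i => snd p (f i (fst p))) l Hd) as [k Hk].
    + intros p Hp. destruct (Hl p Hp) as [Ho Hv]. exact (Hpt (fst p) (snd p) Ho Hv).
    + exists k. intros i Hi. apply HlW. exact (Hk i Hi).
Qed.

Definition cluster_point {X I : Type} (tX : Topology X) (le : I -> I -> Prop)
  (u : I -> X) (x : X) : Prop :=
  forall U, is_open tX U -> U x -> forall i, exists j, le i j /\ U (u j).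

Lemma compact_cluster_point {X I : Type} (tX : Topology X) (le : I -> I -> Prop) (u : I -> X) :
  compact tX -> directed le -> exists x, cluster_point tX le u x.
Proof.
  intros HXc Hd. apply NNPP. intro Hnone.
  pose (F := fun U => is_open tX U /\ eventually le (fun j => ~ U (u j))).
  assert (Hcov : forall x, exists U, F U /\ U x).
  { intro x. apply NNPP. intro Hx. apply Hnone. exists x. intros U HU Ux i.
    apply NNPP. intro Hj. apply Hx. exists U. split; [|exact Ux]. split; [exact HU|].
    exists i. intros j Hij HUj. apply Hj. exists j. auto. }
  destruct (HXc F (fun U HU => proj1 HU) Hcov) as [l [Hl Hlc]].
  destruct (eventually_all le (fun U j => ~ U (u j)) l Hd) as [k Hk].
  - intros U HU. exact (proj2 (Hl U HU)).
  - destruct (Hlc (u k)) as [U [HU Uk]]. exact (Hk k (dir_refl Hd k) U HU Uk).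
Qed.

(* phi : J -> I makes  p |-> v (phi p)  a subnet of v: phi is eventually above each index. *)
Definition cofinal_map {I J : Type} (le : I -> I -> Prop) (leJ : J -> J -> Prop) (phi : J -> I) :
  Prop := forall i, eventually leJ (fun p => le i (phi p)).

Lemma subnet_converges {X I J : Type} (opn : (X -> Prop) -> Prop) (le : I -> I -> Prop)
  (leJ : J -> J -> Prop) (phi : J -> I) (v : I -> X) (y : X) :
  cofinal_map le leJ phi -> converges opn le v y -> converges opn leJ (fun p => v (phi p)) y.
Proof.
  intros Hphi Hv U HU Uy. destruct (Hv U HU Uy) as [i0 Hi0].
  destruct (Hphi i0) as [p0 Hp0]. exists p0. intros p Hp. exact (Hi0 _ (Hp0 p Hp)).
Qed.

(* A cluster point of a net is the limit of some subnet.  The subnet is indexed by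
   pairs (i, U) of an index and an open neighbourhood of x, and picks j >= i with u j in U. *)
Lemma cluster_point_subnet {X I : Type} (tX : Topology X) (le : I -> I -> Prop)
  (u : I -> X) (x : X) :
  directed le -> cluster_point tX le u x ->
  exists (J : Type) (leJ : J -> J -> Prop) (phi : J -> I),
    directed leJ /\ cofinal_map le leJ phi /\ converges (is_open tX) leJ (fun p => u (phi p)) x.
Proof.
  intros Hd Hx.
  set (J := {p : I * (X -> Prop) | is_open tX (snd p) /\ snd p x}).
  assert (Hpick : forall p : J, {j : I | le (fst (proj1_sig p)) j /\ snd (proj1_sig p) (u j)}).
  { intros [[i U] [HU Ux]]. apply constructive_indefinite_description. exact (Hx U HU Ux i). }
  set (leJ := fun p q : J => le (fst (proj1_sig p)) (fst (proj1_sig q)) /\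
                forall z, snd (proj1_sig q) z -> snd (proj1_sig p) z).
  pose (whole := fun i : I => exist _ (i, fun _ => True) (conj (open_full tX) Logic.I) : J).
  exists J, leJ, (fun p => proj1_sig (Hpick p)). split; [|split].
  - constructor.
    + intro p. split; [apply (dir_refl Hd) | auto].
    + intros p q r [A1 B1] [A2 B2]. split; [exact (dir_trans Hd _ _ _ A1 A2) | auto].
    + intros [[i U] [HU Ux]] [[j V] [HV Vx]].
      destruct (dir_upper Hd i j) as [k [Hik Hjk]].
      exists (exist _ (k, fun z => U z /\ V z) (conj (open_inter tX U V HU HV) (conj Ux Vx)) : J).
      unfold leJ; simpl. split; split; auto; intros z [? ?]; auto.
    + destruct (dir_inhabited Hd) as [i0]. exact (inhabits (whole i0)).
  - intro i. exists (whole i). intros p [Hp _].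
    exact (dir_trans Hd _ _ _ Hp (proj1 (proj2_sig (Hpick p)))).
  - intros U HU Ux. destruct (dir_inhabited Hd) as [i0].
    exists (exist _ (i0, U) (conj HU Ux) : J).
    intros p [_ Hp]. apply Hp. exact (proj2 (proj2_sig (Hpick p))).
Qed.

Lemma group_inv_involutive {T : Type} (mul : T -> T -> T) (inv : T -> T) (e : T) :
  is_group mul inv e -> forall a, inv (inv a) = a.
Proof.
  intros G a.
  rewrite <- (grp_mul1r G (inv (inv a))), <- (grp_mulVl G a), (grp_assoc G), (grp_mulVl G).
  apply (grp_mul1l G).
Qed.

Section Enveloping.

Variables (T X : Type) (tX : Topology X) (act : T -> X -> X).

Lemma enveloping_of_limit {I : Type} (le : I -> I -> Prop) (t : I -> T) (g : X -> X) :
  directed le -> converges (fun_open tX) le (fun i => act (t i)) g -> enveloping tX act g.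
Proof.
  intros Hd Hg W HW Wg. destruct (Hg W HW Wg) as [i0 Hi0].
  exists (t i0). apply Hi0, (dir_refl Hd).
Qed.

(* Conversely every g in E(X,T) is the limit of a net of translations, indexed by its
   product-open neighbourhoods ordered by reverse inclusion. *)
Lemma enveloping_net (g : X -> X) :
  enveloping tX act g -> exists (I : Type) (le : I -> I -> Prop) (t : I -> T),
    directed le /\ converges (fun_open tX) le (fun i => act (t i)) g.
Proof.
  intro Hg.
  set (N := {W : (X -> X) -> Prop | fun_open tX W /\ W g}).
  assert (Hpick : forall W : N, {t : T | proj1_sig W (act t)}).
  { intros [W [HW Wg]]. apply constructive_indefinite_description. exact (Hg W HW Wg). }
  exists N, (fun W1 W2 : N => forall f, proj1_sig W2 f -> proj1_sig W1 f).
  exists (fun W => proj1_sig (Hpick W)). split.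
  - constructor.
    + intros W f Hf; exact Hf.
    + intros W1 W2 W3 H12 H23 f Hf. apply H12, H23, Hf.
    + intros [W1 [H1 G1]] [W2 [H2 G2]].
      exists (exist _ (fun f => W1 f /\ W2 f) (conj (fun_open_inter tX W1 W2 H1 H2) (conj G1 G2)) : N).
      split; intros f Hf; simpl in *; tauto.
    + constructor. exists (fun _ => True). split; [|exact Logic.I].
      intros f _. exists nil. split; [intros p [] | auto].
  - intros U HU Ug. exists (exist _ U (conj HU Ug) : N).
    intros W HW. apply HW. exact (proj2_sig (Hpick W)).
Qed.

Lemma enveloping_closed (g : X -> X) :
  (forall W, fun_open tX W -> W g -> exists k, enveloping tX act k /\ W k) ->
  enveloping tX act g.
Proof.
  intros Hg W HW Wg. destruct (Hg W HW Wg) as [k [Hk Wk]]. exact (Hk W HW Wk).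
Qed.

Variables (tT : Topology T) (mul : T -> T -> T) (e : T).
Hypothesis Hact : continuous_action tT tX mul e act.

Lemma enveloping_id : enveloping tX act (fun x => x).
Proof.
  intros W _ Wid. exists e.
  replace (act e) with (fun x : X => x); [exact Wid|].
  apply functional_extensionality. intro x. symmetry. apply (proj1 Hact).
Qed.

(* E(X,T) is stable under left composition by translations, since act t o act s = act (t s). *)
Lemma enveloping_translate (t : T) (h : X -> X) :
  enveloping tX act h -> enveloping tX act (fun x => act t (h x)).
Proof.
  intros Hh W HW Wth.
  destruct (Hh (fun f => W (fun x => act t (f x)))) as [s Hs]; [| exact Wth |].
  - exact (fun_open_postcompose tX (act t) W
             (action_translation_continuous tT tX mul e act Hact t) HW).
  - exists (mul t s). replace (act (mul t s)) with (fun x => act t (act s x)); [exact Hs|].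
    apply functional_extensionality. intro x. symmetry. apply (proj1 (proj2 Hact)).
Qed.

(* E(X,T) is a semigroup under composition: approximate g by a translation act t,
   then g o h is approximated by act t o h, which lies in the closed set E(X,T). *)
Lemma enveloping_comp (g h : X -> X) :
  enveloping tX act g -> enveloping tX act h -> enveloping tX act (fun x => g (h x)).
Proof.
  intros Hg Hh. apply enveloping_closed. intros W HW Wgh.
  destruct (Hg (fun f => W (fun x => f (h x))) (fun_open_precompose tX h W HW) Wgh) as [t Ht].
  exists (fun x => act t (h x)). split; [exact (enveloping_translate t h Hh) | exact Ht].
Qed.

End Enveloping.

Section AlmostAutomorphic.

Variables (T X : Type) (tX : Topology X) (inv : T -> T) (act : T -> X -> X).
Hypothesis Haa : forall x, almost_automorphic tX inv act x.
Hypothesis HXh : hausdorff tX.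

(* Proximal points coincide: both are limits of t_i^-1 z. *)
Lemma distal_of_almost_automorphic : distal tX act.
Proof.
  intros x y [I [le [t [z [Hd [Hx Hy]]]]]].
  exact (limit_unique tX le _ x y HXh Hd (Haa x I le Hd t z Hx) (Haa y I le Hd t z Hy)).
Qed.

(* If t_i --> g and g o h = id, then t_i^-1 --> h: at each point y, t_i (h y) --> y is
   reversed into t_i^-1 y --> h y. *)
Lemma inverse_net_converges (g h : X -> X) {I : Type} (le : I -> I -> Prop) (t : I -> T) :
  directed le -> (forall x, g (h x) = x) ->
  converges (fun_open tX) le (fun i => act (t i)) g ->
  converges (fun_open tX) le (fun i => act (inv (t i))) h.
Proof.
  intros Hd Hgh Hg. apply (converges_fun_iff_pointwise tX le _ h Hd). intro y.
  apply (Haa (h y) I le Hd t y).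
  pose proof (proj1 (converges_fun_iff_pointwise tX le _ g Hd) Hg (h y)) as Hpt.
  rewrite Hgh in Hpt. exact Hpt.
Qed.

(* Elements of E(X,T) are injective: g x = g y makes x and y proximal. *)
Lemma enveloping_injective (g : X -> X) :
  enveloping tX act g -> forall x y, g x = g y -> x = y.
Proof.
  intros Hg x y Hxy. destruct (enveloping_net T X tX act g Hg) as [I [le [t [Hd Ht]]]].
  apply distal_of_almost_automorphic. exists I, le, t, (g x). split; [exact Hd | split].
  - exact (proj1 (converges_fun_iff_pointwise tX le _ g Hd) Ht x).
  - rewrite Hxy. exact (proj1 (converges_fun_iff_pointwise tX le _ g Hd) Ht y).
Qed.

Variables (mul : T -> T -> T) (e : T).
Hypothesis Hgrp : is_group mul inv e.
Hypothesis HXc : compact tX.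

(* Elements of E(X,T) are surjective: with t_i --> g and y in X, a subnet of t_i^-1 y
   converges to a cluster point x; reversing, the same subnet of t_i x converges to y,
   while it also converges to g x. *)
Lemma enveloping_surjective (g : X -> X) :
  enveloping tX act g -> forall y, exists x, g x = y.
Proof.
  intros Hg y. destruct (enveloping_net T X tX act g Hg) as [I [le [t [Hd Ht]]]].
  destruct (compact_cluster_point tX le (fun i => act (inv (t i)) y) HXc Hd) as [x Hx].
  destruct (cluster_point_subnet tX le _ x Hd Hx) as [J [leJ [phi [HdJ [Hphi Hsub]]]]].
  exists x. apply (limit_unique tX leJ (fun p => act (t (phi p)) x) _ _ HXh HdJ).
  - apply (subnet_converges (is_open tX) le leJ phi (fun i => act (t i) x) (g x) Hphi).
    exact (proj1 (converges_fun_iff_pointwise tX le _ g Hd) Ht x).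
  - apply (converges_ext (is_open tX) leJ (fun p => act (inv (inv (t (phi p)))) x)).
    + intro p. rewrite (group_inv_involutive mul inv e Hgrp). reflexivity.
    + exact (Haa y J leJ HdJ (fun p => inv (t (phi p))) x Hsub).
Qed.

(* Every g in E(X,T) is invertible in E(X,T): it is a bijection, and its inverse is the
   limit of t_i^-1 for any net t_i --> g. *)
Lemma enveloping_inverse (g : X -> X) :
  enveloping tX act g -> exists h, enveloping tX act h /\
    (forall x, g (h x) = x) /\ (forall x, h (g x) = x).
Proof.
  intros Hg.
  destruct (choice (fun y x => g x = y) (enveloping_surjective g Hg)) as [h Hgh].
  destruct (enveloping_net T X tX act g Hg) as [I [le [t [Hd Ht]]]].
  exists h. repeat split; [| exact Hgh |].
  - exact (enveloping_of_limit T X tX act le (fun i => inv (t i)) h Hd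
             (inverse_net_converges g h le t Hd Hgh Ht)).
  - intro x. apply (enveloping_injective g Hg). apply Hgh.
Qed.

End AlmostAutomorphic.

Theorem mainTheorem2 (T X : Type) (tT : Topology T) (tX : Topology X)
  (mul : T -> T -> T) (inv : T -> T) (e : T) (act : T -> X -> X)
  (HT : topological_group tT mul inv e)
  (Hact : continuous_action tT tX mul e act)
  (HXc : compact tX) (HXh : hausdorff tX)
  (Haa : forall x : X, almost_automorphic tX inv act x) :
  distal tX act /\
  enveloping_is_group tX act /\
  (forall g h : X -> X,
     enveloping tX act g -> enveloping tX act h ->
     (forall x, g (h x) = x) -> (forall x, h (g x) = x) ->
     forall (I : Type) (le : I -> I -> Prop) (t : I -> T),
       directed le ->
       converges (fun_open tX) le (fun i => act (t i)) g ->
       converges (fun_open tX) le (fun i => act (inv (t i))) h).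
Proof.
  destruct HT as [Hgrp _].
  split; [exact (distal_of_almost_automorphic T X tX inv act Haa HXh) |].
  split.
  - split; [exact (enveloping_id T X tX act tT mul e Hact) |]. split.
    + exact (enveloping_comp T X tX act tT mul e Hact).
    + exact (enveloping_inverse T X tX inv act Haa HXh mul e Hgrp HXc).
  - intros g h _ _ Hgh _ I le t Hd Hg.
    exact (inverse_net_converges T X tX inv act Haa g h le t Hd Hgh Hg).
Qed.
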